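(* Let $D(\mathbf x)\in\mathbb F^k[\mathbf x]$ have a cone-closed basis. Then $D$ is $(k+1)$-cone concentrated and $(\lg 2k)$-support concentrated.
   Context: For $D\in\mathbb F^k[\mathbf x]$, $\mathrm{lrsp}(D)$ is the span of its coefficient vectors in $\mathbb F^k$. A set of monomials is cone-closed if it contains all submonomials ($\mathbf x^{\mathbf e'}$ with $\mathbf e'\le\mathbf e$ coordinatewise) of each of its elements; $D$ has a cone-closed basis if some cone-closed set of monomials has coefficients forming a basis of $\mathrm{lrsp}(D)$. The cone-size of $\mathbf x^{\mathbf e}$ is $\prod_i(e_i+1)$; its support size is the number of $i$ with $e_i>0$. $D$ is $\ell$-cone concentrated (resp. $\ell$-support concentrated) if the coefficients of the monomials of cone-size $<\ell$ (resp. support size $<\ell$) span $\mathrm{lrsp}(D)$. *)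

From HB Require Import structures.
From mathcomp Require Import all_boot all_order all_algebra.
Set Implicit Arguments. Unset Strict Implicit. Unset Printing Implicit Defensive.
Import GRing.Theory.
Local Open Scope ring_scope.

(* Monomials x^e in n variables, represented by exponent vectors e : 'I_n -> nat. *)
Definition mon (n : nat) := {ffun 'I_n -> nat}.

(* A polynomial D in F^k[x_1..x_n] is a coefficient map D : mon n -> 'rV[F]_k
   together with a finite list s of monomials outside of which D vanishes. *)
Definition supported_in (F : fieldType) (n k : nat)
  (D : mon n -> 'rV[F]_k) (s : seq (mon n)) : Prop :=
  forall e, e \notin s -> D e = 0.

Definition lrsp (F : fieldType) (n k : nat) (D : mon n -> 'rV[F]_k) (s : seq (mon n)) :=
  (\sum_(e <- s) <<D e>>)%MS.

Definition span_coef (F : fieldType) (n k : nat) (D : mon n -> 'rV[F]_k)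
  (s : seq (mon n)) (P : pred (mon n)) :=
  (\sum_(e <- s | P e) <<D e>>)%MS.

Definition submon (n : nat) (e' e : mon n) : bool := [forall i, e' i <= e i]%N.

Definition cone_closed (n : nat) (B : seq (mon n)) : Prop :=
  forall e e', e \in B -> submon e' e -> e' \in B.

Definition coef_basis (F : fieldType) (n k : nat) (D : mon n -> 'rV[F]_k)
  (s : seq (mon n)) (B : seq (mon n)) : Prop :=
  [/\ uniq B,
      row_free (\matrix_(i < size B) D (nth [ffun=> 0%N] B i)) &
      (\matrix_(i < size B) D (nth [ffun=> 0%N] B i) == lrsp D s)%MS].

Definition has_cone_closed_basis (F : fieldType) (n k : nat)
  (D : mon n -> 'rV[F]_k) (s : seq (mon n)) : Prop :=
  exists B : seq (mon n), cone_closed B /\ coef_basis D s B.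

Definition cone_size (n : nat) (e : mon n) : nat := (\prod_(i < n) (e i).+1)%N.
Definition supp_size (n : nat) (e : mon n) : nat := #|[pred i | 0 < e i]%N|.

Definition cone_concentrated (F : fieldType) (n k : nat) (D : mon n -> 'rV[F]_k)
  (s : seq (mon n)) (l : nat) : Prop :=
  (span_coef D s (fun e => cone_size e < l)%N == lrsp D s)%MS.

(* support size < lg(2k)  <=>  2^(support size) < 2k  (support size is an integer) *)
Definition support_concentrated_lg2k (F : fieldType) (n k : nat)
  (D : mon n -> 'rV[F]_k) (s : seq (mon n)) : Prop :=
  (span_coef D s (fun e => 2 ^ supp_size e < 2 * k)%N == lrsp D s)%MS.

(* A cone-closed basis B contains the whole cone below each of its monomials,
   and it has at most k elements since its coefficient vectors are independent
   in F^k; hence every monomial of B has cone size at most k.  As each variable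
   in the support contributes a factor at least 2 to the cone size, such a
   monomial also has 2^(support size) <= k < 2k.  The coefficients of the
   monomials of B already span lrsp(D), so both kinds of concentration follow. *)
From HB Require Import structures.
From mathcomp Require Import all_boot all_order all_algebra.
From mathcomp Require Import zify.

Set Implicit Arguments.
Unset Strict Implicit.
Unset Printing Implicit Defensive.

Section SeqSums.

Variables (F : fieldType) (k : nat) (T : eqType) (A : T -> 'rV[F]_k).

Lemma sumsmx_seq_filter_sub (s : seq T) (P : pred T) :
  (\sum_(e <- s | P e) <<A e>> <= \sum_(e <- s) <<A e>>)%MS.
Proof.
elim: s => [|x s IH]; rewrite ?big_nil ?big_cons //.
case: (P x); first exact: addsmxS.
exact: submx_trans IH (addsmxSr _ _).
Qed.

Lemma sumsmx_seq_sup (s : seq T) (P : pred T) x :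
  x \in s -> P x -> (A x <= \sum_(e <- s | P e) <<A e>>)%MS.
Proof.
move=> xs Px; elim: s xs => [|y s IH] //; rewrite inE big_cons => /orP [/eqP <-|xs].
  by rewrite Px; apply: submx_trans (addsmxSl _ _); rewrite genmxE.
case: (P y); last exact: IH.
exact: submx_trans (IH xs) (addsmxSr _ _).
Qed.

End SeqSums.

Lemma card_ord_leq (M a : nat) :
  (a < M)%N -> #|[pred j : 'I_M | (j <= a)%N]| = a.+1.
Proof.
move=> aM; rewrite -[a.+1]card_ord -(@card_codom _ _ (widen_ord aM)).
  apply: eq_card => j; rewrite inE; apply/idP/codomP => [ja|[x ->] /=].
    by exists (Ordinal (ja : j < a.+1)%N); apply: val_inj.
  by rewrite -ltnS.
by move=> x y /(congr1 val) /= /val_inj.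
Qed.

(* The cone of e is enumerated by the functions 'I_n -> 'I_N.+1 bounded by e,
   with N the largest exponent of e. *)
Lemma cone_size_leq_size (n : nat) (B : seq (mon n)) (e : mon n) :
  cone_closed B -> e \in B -> (cone_size e <= size B)%N.
Proof.
move=> ccB eB; set N := (\max_(i < n) e i)%N.
pose below := fun i : 'I_n => [pred j : 'I_N.+1 | (j <= e i)%N].
pose to_mon := fun f : {ffun 'I_n -> 'I_N.+1} => [ffun i => val (f i)] : mon n.
have to_mon_inj : injective to_mon.
  move=> f1 f2 /ffunP eqf; apply/ffunP=> i; apply: val_inj.
  by have := eqf i; rewrite !ffunE.
have -> : cone_size e = #|(family below : simpl_pred {ffun 'I_n -> 'I_N.+1})|.
  rewrite card_family /cone_size /image_mem -big_enum /= enumT.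
  elim: (Finite.enum _) => [|i r IH] /=; rewrite ?big_nil ?big_cons ?IH //.
  by rewrite card_ord_leq // ltnS (leq_bigmax i).
rewrite cardE -(size_map to_mon).
apply: uniq_leq_size; first by rewrite (map_inj_uniq to_mon_inj) enum_uniq.
move=> m /mapP [f]; rewrite mem_enum => /familyP below_f ->.
by apply: (ccB e) => //; apply/forallP => i; rewrite ffunE; apply: below_f.
Qed.

Lemma exp2_supp_size_leq_cone_size (n : nat) (e : mon n) :
  (2 ^ supp_size e <= cone_size e)%N.
Proof.
rewrite /supp_size /cone_size -prod_nat_const big_mkcond /=.
by apply: leq_prod => i _; rewrite inE; case: (e i).
Qed.

Section ConeClosedBasis.

Variables (F : fieldType) (n k : nat) (D : mon n -> 'rV[F]_k) (s : seq (mon n)).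
Hypothesis suppD : supported_in D s.
Variable B : seq (mon n).
Hypothesis basisB : coef_basis D s B.

Lemma coef_basis_size_leq : (size B <= k)%N.
Proof. by case: basisB => _ /eqP <- _; apply: rank_leq_col. Qed.

Lemma coef_basis_span_coef (P : pred (mon n)) :
  {in B, forall e, P e} -> (span_coef D s P == lrsp D s)%MS.
Proof.
move=> PB; apply/andP; split; first exact: sumsmx_seq_filter_sub.
case: basisB => _ _ /andP [_ lrsp_sub]; apply: submx_trans lrsp_sub _.
apply/row_subP => i; rewrite rowK.
have biB : nth [ffun=> 0%N] B i \in B by rewrite mem_nth.
have [bis | bi_notin_s] := boolP (nth [ffun=> 0%N] B i \in s).
  exact: sumsmx_seq_sup bis (PB _ biB).
by rewrite suppD // sub0mx.
Qed.

End ConeClosedBasis.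

Theorem lemma4p1 (F : fieldType) (n k : nat) (D : mon n -> 'rV[F]_k) (s : seq (mon n)) :
  supported_in D s ->
  has_cone_closed_basis D s ->
  cone_concentrated D s k.+1 /\ support_concentrated_lg2k D s.
Proof.
move=> suppD [B [ccB basisB]].
have cone_leq_k e : e \in B -> (cone_size e <= k)%N.
  move=> eB; apply: leq_trans (coef_basis_size_leq basisB).
  exact: cone_size_leq_size.
split; apply: (coef_basis_span_coef suppD basisB) => e eB.
  by rewrite ltnS cone_leq_k.
have exp_leq_k := leq_trans (exp2_supp_size_leq_cone_size e) (cone_leq_k e eB).
have := expn_gt0 2 (supp_size e); lia.
Qed.
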